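(* Let $K,k,l\in\mathbb{N}$ with $K\ge k+l$ and $0\le l-k\le 2$. Let $\bar a,\bar b$ be binary sequences with $|\bar a|\ge|\bar b|$ such that $\bar a$ is top $l$ full and $\bar b$ is top $k$ full. Then $\mathrm{oe\_combine}_K(\bar a,\bar b)$ is top $l+k$ full.
   Context: A binary sequence $\bar r$ is top $k'$ full if it has the form $1^{k'}\bar r'$ for some binary $\bar r'$ (in particular $|\bar r|\ge k'$). For sequences $\bar a=\langle a_1,\dots,a_p\rangle$, $\bar b=\langle b_1,\dots,b_q\rangle$ with $p\ge q$, $\mathrm{zip}(\bar a,\bar b)=\langle a_1,b_1,a_2,b_2,\dots,a_q,b_q,a_{q+1},\dots,a_p\rangle$. The network $\mathrm{oe\_combine}_K(\bar a,\bar b)$ is defined as: let $\bar z=\mathrm{zip}(\bar a,\bar b)$; for each $i=1,\dots,\lfloor\min(K,|\bar z|-1)/2\rfloor$ replace the pair $(z_{2i},z_{2i+1})$ by $(\max(z_{2i},z_{2i+1}),\min(z_{2i},z_{2i+1}))$; return $\bar z$. *)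

(* Binary sequences are [seq bool] with [true] = 1, [false] = 0. *)
From mathcomp Require Import all_boot.
Set Implicit Arguments. Unset Strict Implicit. Unset Printing Implicit Defensive.

Definition top_full (k' : nat) (r : seq bool) : Prop :=
  exists r' : seq bool, r = nseq k' true ++ r'.

Fixpoint bzip (a b : seq bool) : seq bool :=
  match a, b with
  | x :: a', y :: b' => x :: y :: bzip a' b'
  | [::], _ => b
  | _, [::] => a
  end.

(* comparator (max, min) on bits: max = orb, min = andb *)
Fixpoint cmp_pairs (n : nat) (s : seq bool) : seq bool :=
  match n, s with
  | n'.+1, x :: y :: s' => (x || y) :: (x && y) :: cmp_pairs n' s'
  | _, _ => s
  end.

(* oe_combine_K(a,b): z = zip a b; for i = 1 .. floor(min(K,|z|-1)/2),
   (z_{2i}, z_{2i+1}) := (max, min) (1-indexed).  The first element z_1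
   is untouched and the pairs are (z_2,z_3), (z_4,z_5), ... *)
Definition oe_combine (K : nat) (a b : seq bool) : seq bool :=
  let z := bzip a b in
  match z with
  | [::] => [::]
  | z1 :: zs => z1 :: cmp_pairs ((minn K (size z).-1)./2) zs
  end.

(* Comparators never move a [1] out of a block of leading ones, so the
   [2k + (l - k)] leading ones that interleaving produces survive whenever
   [l - k <= 1].  When [l - k = 2], the interleaving reads
   [1^(2k+1) y 1 ...] with [y] the first free bit of [b], and the comparator
   on the pair [(y, 1)] — which acts since [K >= 2k + 2] — restores
   [1^(2k+2)]. *)
From mathcomp Require Import all_boot.
From mathcomp Require Import zify.

Lemma bzip_cons x a b : bzip (x :: a) b = x :: bzip b a.
Proof.
elim: a x b => [|x' a IH] x [|y b] //.
by rewrite -[RHS]/(x :: y :: x' :: bzip b a) -IH.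
Qed.

Lemma bzip_nseq j x a b :
  bzip (nseq j x ++ a) (nseq j x ++ b) = nseq j.*2 x ++ bzip a b.
Proof. by elim: j => //= j ->. Qed.

Lemma top_full_cmp_pairs n m s : top_full m s -> top_full m (cmp_pairs n s).
Proof.
elim: n m s => [|n IH] m s [r ->]; first by exists r.
case: m => [|[|m]] /=; first by exists (cmp_pairs n.+1 r).
- by case: r => [|y r]; eexists.
- by have [r' ->] := IH m _ (ex_intro _ r erefl); exists r'.
Qed.

Lemma cmp_pairs_fill_gap n j y s : j < n ->
  cmp_pairs n (nseq j.*2 true ++ y :: true :: s) =
  nseq j.*2.+1 true ++ y :: cmp_pairs (n - j.+1) s.
Proof. by elim: j n => [|j IH] [|n] //= lt_jn; rewrite ?orbT ?andbT ?subn1 ?IH. Qed.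

Lemma top_full_oe_combine K a b m s :
  bzip a b = nseq m true ++ s -> top_full m (oe_combine K a b).
Proof.
rewrite /oe_combine => ->; case: m => [|m] /=; first by eexists.
set n := (minn K _)./2.
have [r ->] : top_full m (cmp_pairs n (nseq m true ++ s)).
  by apply: top_full_cmp_pairs; exists s.
by exists r.
Qed.

Lemma oe_combine_fill_gap K a b j y s :
  bzip a b = nseq j.*2.+1 true ++ y :: true :: s -> j.*2.+2 <= K ->
  top_full j.*2.+2 (oe_combine K a b).
Proof.
rewrite /oe_combine => -> le_K /=; set n := (minn K _)./2.
rewrite cmp_pairs_fill_gap; last by rewrite /n size_cat size_nseq /=; lia.
by exists (y :: cmp_pairs (n - j.+1) s).
Qed.

Theorem mainTheorem6 (K k l : nat) (a b : seq bool) :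
  k + l <= K -> k <= l -> l - k <= 2 ->
  size b <= size a ->
  top_full l a -> top_full k b ->
  top_full (l + k) (oe_combine K a b).
Proof.
move=> + le_kl + _ [a' ->] [b' ->]; rewrite -(subnKC le_kl).
set d := l - k; rewrite addKn => le_K le_d.
have zE : bzip (nseq (k + d) true ++ a') (nseq k true ++ b') =
          nseq k.*2 true ++ bzip (nseq d true ++ a') b'.
  by rewrite nseqD -catA bzip_nseq.
have -> : k + d + k = k.*2 + d by lia.
case: d le_K le_d zE => [|[|[|d]]] le_K le_d zE; try lia.
- by apply: top_full_oe_combine; rewrite zE addn0.
- by apply: top_full_oe_combine; rewrite zE bzip_cons nseqD -catA.
- case: b' zE => [|y b'] zE.
    by apply: top_full_oe_combine; rewrite zE nseqD -catA.
  rewrite addn2; apply: oe_combine_fill_gap; last by lia.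
  by rewrite zE !bzip_cons -cat_rcons -addn1 nseqD cats1.
Qed.
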